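(* Let $F\in\mathbb{Z}[x_1,\dots,x_n]$ be an integral form in $n$ variables of degree greater than one. Suppose that there exist integers $a_1,\dots,a_{n-1}$ for which the one-variable polynomial $F(x,a_1,\dots,a_{n-1})\in\mathbb{Z}[x]$ has non-zero discriminant. Then $R(F)$ is dense in $\mathbb{Q}_p$ for infinitely many primes $p$.
   Context: A form is a homogeneous polynomial; it is integral if its coefficients lie in $\mathbb{Z}$. For an integral form $F$ in $r$ variables, its ratio set is $R(F)=\{F(\overline{x})/F(\overline{y}) : \overline{x},\overline{y}\in\mathbb{Z}^r,\ F(\overline{y})\neq 0\}\subseteq\mathbb{Q}$, and density refers to the $p$-adic topology on $\mathbb{Q}_p$. The discriminant of $f(x)=a_mx^m+\dots+a_0$ is $a_m^{2m-2}\prod_{i<j}(r_i-r_j)^2$, where $r_1,\dots,r_m$ are the roots of $f$ in an algebraic closure. *)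

From HB Require Import structures.
From mathcomp Require Import all_boot all_order all_algebra all_field.
From mathcomp Require Import mpoly.
Set Implicit Arguments. Unset Strict Implicit. Unset Printing Implicit Defensive.
Import Order.TTheory GRing.Theory Num.Theory.
Local Open Scope ring_scope.

Definition padic_val (p : nat) (q : rat) : int :=
  (logn p `|numq q|%N)%:Z - (logn p `|denq q|%N)%:Z.

(* |x - y|_p <= p^-k, i.e. x = y or v_p(x - y) >= k. *)
Definition padic_close (p : nat) (k : int) (x y : rat) : Prop :=
  x = y \/ (k <= padic_val p (x - y))%R.

(* A subset S of Q is dense in Q_p: since Q is dense in Q_p, this is
   equivalent to: every rational is a p-adic limit of elements of S. *)
Definition padic_dense (p : nat) (S : rat -> Prop) : Prop :=
  forall (q : rat) (k : int), exists s, S s /\ padic_close p k s q.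

Definition ratio_set (r : nat) (F : {mpoly int[r]}) : rat -> Prop :=
  fun t => exists (x y : 'I_r -> int),
      F.@[y] != 0 /\ t = (F.@[x])%:~R / (F.@[y])%:~R.

(* Convention: constant polynomials get 0. *)
Definition disc (f : {poly int}) : algC :=
  let g := map_poly (fun z : int => z%:~R : algC) f in
  let rs := sval (closed_field_poly_normal g) in
  let m := (size f).-1 in
  if (m == 0)%N then 0 else
  lead_coef g ^+ (2 * m - 2) *
    \prod_(i < size rs) \prod_(j < size rs | (i < j)%N) (rs`_i - rs`_j) ^+ 2.

Definition specialize_first (n : nat) (F : {mpoly int[n.+1]})
    (a : 'I_n -> int) : {poly int} :=
  mmap (fun c : int => c%:P)
       (fun i : 'I_n.+1 => match unlift ord0 i with
                           | None => 'X
                           | Some j => (a j)%:P end) F.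

(* If f(x) = F(x, a) has nonzero discriminant, then U f + V f' = D for some
   nonzero integer D.  Schur's argument gives infinitely many primes p not
   dividing D that divide some value f(r); then p does not divide f'(r), and
   Hensel lifting makes the values of f p-adically dense in pZ.  Write
   q = nu / (be p^al) with p coprime to be, and pick x, y with f(x) close to
   p nu p^(al (d-1)) and f(y) close to p be.  By homogeneity
   F(x, a) / F(p^al (y, a)) = f(x) / (p^(al d) f(y)), which is close to q. *)

From mathcomp Require Import all_boot all_order all_algebra all_field.
From mathcomp Require Import mpoly.
From mathcomp Require Import zify ring.
Set Implicit Arguments. Unset Strict Implicit. Unset Printing Implicit Defensive.
Import GRing.Theory Num.Theory.
Local Open Scope ring_scope.

Local Notation pZtoQ := (map_poly (intr : int -> rat)).

Section Taylor.
Variable R : comNzRingType.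

Lemma horner_add_deriv (f : {poly R}) (x h : R) :
  exists e, f.[x + h] = f.[x] + h * f^`().[x] + h ^+ 2 * e.
Proof.
elim/poly_ind: f => [|g c [e IH]].
  by exists 0; rewrite deriv0 !horner0; ring.
exists (g^`().[x] + e * (x + h)).
by rewrite derivMXaddC !(hornerE, IH); ring.
Qed.

Lemma horner_add_mul (f : {poly R}) (x h : R) :
  exists e, f.[x + h] = f.[x] + h * e.
Proof.
have [e ->] := horner_add_deriv f x h.
by exists (f^`().[x] + h * e); ring.
Qed.

End Taylor.

Section Hensel.
Variables (f : {poly int}) (p : nat) (r : int).
Hypotheses (p_prime : prime p) (p_dvd_fr : (p%:Z %| f.[r])%Z)
  (p_ndvd_f'r : ~~ (p%:Z %| f^`().[r])%Z).

Lemma hensel_lift (T : int) : (p%:Z %| T)%Z ->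
  forall K : nat, exists x, (p%:Z %| x - r)%Z /\ (p%:Z ^+ K.+1 %| f.[x] - T)%Z.
Proof.
move=> p_dvd_T; elim=> [|K [x [/dvdzP [z x_eq] /dvdzP [w fx_eq]]]].
  by exists r; rewrite subrr dvdz0 expr1 rpredB.
have /coprimezP [[s v] /= bezout] : coprimez f^`().[r] p.
  by rewrite coprimez_sym coprimezE prime_coprime.
exists (x + p%:Z ^+ K.+1 * (- w * s)); split.
  rewrite addrAC x_eq; apply: rpredD; first exact: dvdz_mull.
  by rewrite exprS -mulrA dvdz_mulr.
have [e f_taylor] := horner_add_deriv f x (p%:Z ^+ K.+1 * (- w * s)).
have [h f'_taylor] := horner_add_mul f^`() r (x - r).
rewrite addrC subrK x_eq in f'_taylor.
have {}fx_eq : f.[x] = T + w * p%:Z ^+ K.+1 by rewrite -fx_eq addrC subrK.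
(* [s] inverts [f'(r)] modulo [p], which kills the first-order term. *)
have w_split : w = w * s * f^`().[r] + w * v * p%:Z.
  by rewrite -mulrA -mulrA -mulrDr bezout mulr1.
apply/dvdzP; exists (w * v - w * s * z * h + p%:Z ^+ K * (w * s) ^+ 2 * e).
by rewrite f_taylor f'_taylor fx_eq {1}w_split !exprS; ring.
Qed.

End Hensel.

Lemma exists_nonroot_int (g : {poly int}) : g != 0 -> exists m : int, ~~ root g m.
Proof.
move=> g_neq0; set s := [seq i%:Z | i <- iota 0 (size g)].
have [all_roots|/allPn [m _ ?]] := boolP (all (root g) s); last by exists m.
have := roots_geq_poly_eq0 all_roots.
rewrite map_inj_uniq ?iota_uniq => [|i j [] //].
by rewrite size_map size_iota leqnn => /(_ isT isT) /eqP; rewrite (negPf g_neq0).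
Qed.

Lemma prime_dvd_1_addM (Q : nat) (k : int) : (2 < Q)%N -> k != 0 ->
  exists p, [/\ prime p, coprime p Q & (p%:Z %| (1 + Q%:Z * k)%R)%Z].
Proof.
move=> Q_gt2 k_neq0; have H_gt1 : (1 < `|(1 + Q%:Z * k)%R|)%N by nia.
set H := 1 + _ in H_gt1 *; have p_prime := pdiv_prime H_gt1.
have p_dvd_H : ((pdiv `|H|)%:Z %| H)%Z by rewrite dvdzE pdiv_dvd.
exists (pdiv `|H|); split=> //.
rewrite prime_coprime //; apply/negP => p_dvd_Q.
have p_dvd_Qk : ((pdiv `|H|)%:Z %| Q%:Z * k)%Z by rewrite dvdz_mulr // dvdzE.
have := rpredB p_dvd_H p_dvd_Qk; rewrite addrK dvdzE /= dvdn1.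
by move/eqP => p1; rewrite p1 in p_prime.
Qed.

Lemma schur_prime_divisor (f : {poly int}) (P : nat) : (0 < P)%N -> (1 < size f)%N ->
  exists p r, [/\ prime p, coprime p P & (p%:Z %| f.[r])%Z].
Proof.
move=> P_gt0 f_gt1.
have [f0_eq0|c_neq0] := eqVneq f.[0] 0.
  have [p P_lt_p p_prime] := prime_above P.
  exists p, 0; split=> //; last by rewrite f0_eq0 dvdz0.
  by rewrite prime_coprime // gtnNdvd.
set c := f.[0] in c_neq0 *; set Q := (3 * P)%N.
have Q_gt2 : (2 < Q)%N by rewrite /Q; lia.
have g_neq0 : f \Po ((c * Q%:Z) *: 'X) - c%:P != 0.
  apply: contraTneq f_gt1 => /subr0_eq fc.
  have := congr1 (fun q : {poly int} => size q) fc.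
  rewrite size_comp_poly2 ?size_polyC ?size_scale ?size_polyX ?mulf_neq0 ?c_neq0 //.
    by move=> ->.
  by rewrite /Q; lia.
have [m] := exists_nonroot_int g_neq0.
rewrite /root hornerD hornerN horner_comp hornerZ hornerX hornerC subr_eq0 => fm_neq_c.
have [e fE] := horner_add_mul f 0 (c * Q%:Z * m).
rewrite add0r -/c in fE.
(* [f(c Q m) = c (1 + Q m e)] and the cofactor is [1] modulo [Q]. *)
have me_neq0 : m * e != 0.
  by apply: contra fm_neq_c => /eqP me0; rewrite fE -!mulrA me0 !mulr0 addr0.
have [p [p_prime p_coprime p_dvd]] := prime_dvd_1_addM Q_gt2 me_neq0.
exists p, (c * Q%:Z * m); split=> //.
- by move: p_coprime; rewrite /Q coprimeMr => /andP[].
- by rewrite fE (_ : _ + _ = c * (1 + Q%:Z * (m * e))) ?dvdz_mull //; ring.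
Qed.

Lemma disc_neq0_size (f : {poly int}) : disc f != 0 -> (1 < size f)%N.
Proof. by rewrite /disc; case: ifP => [_|]; [rewrite eqxx | case: (size f) => [|[]]]. Qed.

Lemma disc_neq0_separable (f : {poly int}) : disc f != 0 -> separable_poly (pZtoQ f).
Proof.
move=> disc_neq0; have f_neq0 : f != 0.
  by rewrite -size_poly_gt0 (ltn_trans _ (disc_neq0_size disc_neq0)).
move: disc_neq0; rewrite /disc; set g := map_poly _ f.
case: (closed_field_poly_normal g) => rs /= g_split.
case: ifP => _; first by rewrite eqxx.
rewrite mulf_eq0 negb_or => /andP[_ prod_neq0].
have rs_uniq : uniq rs.
  apply/(uniqPn 0) => -[i [j [ij js rs_ij]]]; move/negP: prod_neq0; apply.
  apply/prodf_eq0; exists (Ordinal (ltn_trans ij js)) => //.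
  by apply/prodf_eq0; exists (Ordinal js) => //=; rewrite rs_ij subrr expr0n.
have lc_neq0 : lead_coef g != 0.
  by rewrite /g lead_coef_map_inj ?intr_eq0 ?lead_coef_eq0 //; exact: intr_inj.
rewrite -(separable_map (@ratr algC)) -map_poly_comp.
have -> : map_poly (ratr \o intr) f = g by apply: eq_map_poly => z /=; rewrite ratr_int.
by rewrite g_split (eqp_separable (eqp_scale _ lc_neq0)) separable_prod_XsubC.
Qed.

Lemma coprimep_int_bezout (f g : {poly int}) : coprimep (pZtoQ f) (pZtoQ g) ->
  exists U V (D : int), D != 0 /\ U * f + V * g = D%:P.
Proof.
move=> /Bezout_eq1_coprimepP [[u v] /= uv_eq1].
have [U [a a_neq0 u_eq]] := rat_poly_scale u.
have [V [b b_neq0 v_eq]] := rat_poly_scale v.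
have UE : pZtoQ U = a%:~R *: u by rewrite u_eq scalerA mulfV ?intr_eq0 // scale1r.
have VE : pZtoQ V = b%:~R *: v by rewrite v_eq scalerA mulfV ?intr_eq0 // scale1r.
exists (b%:P * U), (a%:P * V), (a * b); split; first by rewrite mulf_neq0.
apply: (@map_inj_poly _ _ (intr : int -> rat)) => //; first exact: intr_inj.
rewrite rmorphD !rmorphM /= !map_polyC /= UE VE -!mul_polyC.
by rewrite -[RHS]mulr1 -uv_eq1; ring.
Qed.

Lemma disc_neq0_bezout (f : {poly int}) : disc f != 0 ->
  exists U V (D : int), D != 0 /\ U * f + V * f^`() = D%:P.
Proof.
by move/disc_neq0_separable; rewrite unlock deriv_map; apply: coprimep_int_bezout.
Qed.

Lemma schur_primes (f : {poly int}) (D : int) : D != 0 -> (1 < size f)%N ->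
  forall N : nat, exists p r,
    [/\ (N < p)%N, prime p, ~~ (p%:Z %| D)%Z & (p%:Z %| f.[r])%Z].
Proof.
move=> D_neq0 f_gt1 N.
have P_gt0 : (0 < N`! * `|D|)%N by rewrite muln_gt0 fact_gt0 absz_gt0.
have [p [r [p_prime]]] := schur_prime_divisor P_gt0 f_gt1.
rewrite coprimeMr => /andP[p_coprime_fact p_coprime_D] p_dvd_fr.
exists p, r; split=> //; last by rewrite dvdzE -prime_coprime.
rewrite ltnNge; apply: contraL p_coprime_fact => p_le_N.
by rewrite prime_coprime // negbK dvdn_fact // prime_gt0.
Qed.

Lemma disc_neq0_hensel_prime (f : {poly int}) : disc f != 0 ->
  forall N : nat, exists p r,
    [/\ (N < p)%N, prime p, (p%:Z %| f.[r])%Z & ~~ (p%:Z %| f^`().[r])%Z].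
Proof.
move=> disc_neq0 N.
have [U [V [D [D_neq0 bezout]]]] := disc_neq0_bezout disc_neq0.
have [p [r [N_lt_p p_prime p_ndvd_D p_dvd_fr]]] :=
  schur_primes D_neq0 (disc_neq0_size disc_neq0) N.
exists p, r; split=> //; apply: contra p_ndvd_D => p_dvd_f'r.
have := congr1 (horner^~ r) bezout; rewrite hornerD !hornerM hornerC => <-.
by rewrite rpredD ?dvdz_mull.
Qed.

Lemma padic_val_frac (p : nat) (a b : int) : a != 0 -> b != 0 ->
  padic_val p (a%:~R / b%:~R) = (logn p `|a|)%:Z - (logn p `|b|)%:Z.
Proof.
move=> a_neq0 b_neq0; set z : rat := _ / _.
have z_neq0 : z != 0 by rewrite /z mulf_neq0 ?invr_eq0 ?intr_eq0.
have num_neq0 : numq z != 0 by rewrite numq_eq0.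
have den_neq0 : denq z != 0 by rewrite denq_eq0.
have cross : (`|numq z| * `|b| = `|a| * `|denq z|)%N.
  rewrite -!abszM; congr absz; apply/eqP.
  by rewrite -(eqr_int rat) !rmorphM /= -eqr_div ?intr_eq0 // divq_num_den.
have := congr1 (logn p) cross; rewrite !lognM ?absz_gt0 // /padic_val; lia.
Qed.

Lemma padic_close_frac (p K M : nat) (k : int) (s q : rat) (A B : int) :
  prime p -> B != 0 -> s - q = A%:~R / B%:~R -> (p%:Z ^+ K %| A)%Z ->
  (logn p `|B| <= M)%N -> (M + `|k| <= K)%N -> padic_close p k s q.
Proof.
move=> p_prime B_neq0 sq_eq pK_dvd_A logB_le k_le.
have [A_eq0|A_neq0] := eqVneq A 0.
  by left; apply/eqP; rewrite -subr_eq0 sq_eq A_eq0 mul0r.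
right; rewrite sq_eq padic_val_frac //.
move: pK_dvd_A; rewrite dvdzE abszX /= pfactor_dvdn ?absz_gt0 //; lia.
Qed.

Lemma meval_dhomogZ (R : comNzRingType) (r d : nat) (F : {mpoly R[r]}) (c : R)
    (v : 'I_r -> R) :
  F \is d.-homog -> F.@[fun i => c * v i] = c ^+ d * F.@[v].
Proof.
move=> F_homog; rewrite !mevalE mulr_sumr; apply: eq_big_seq => m m_supp.
have : mdeg m = d := dhomog_mf F_homog m_supp.
rewrite mdegE => <-.
under eq_bigr do rewrite exprMn.
by rewrite big_split /= prodrXr; ring.
Qed.

Definition cons_point (n : nat) (t : int) (a : 'I_n -> int) : 'I_n.+1 -> int :=
  fun i => if unlift ord0 i is Some j then a j else t.

Lemma horner_specialize_first (n : nat) (F : {mpoly int[n.+1]}) (a : 'I_n -> int) (t : int) :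
  (specialize_first F a).[t] = F.@[cons_point t a].
Proof.
rewrite /specialize_first /mmap mevalE horner_sum; apply: eq_bigr => m _.
rewrite hornerM hornerC /mmap1 horner_prod; congr (_ * _); apply: eq_bigr => i _.
by rewrite horner_exp /cons_point; case: (unlift ord0 i) => [j|]; rewrite ?hornerC ?hornerX.
Qed.

Section RatioSet.
Variables (n d : nat) (F : {mpoly int[n.+1]}) (a : 'I_n -> int).
Hypothesis F_homog : F \is d.+1.-homog.
Local Notation f := (specialize_first F a).

Lemma ratio_set_specialize (c x y : int) : c != 0 -> f.[y] != 0 ->
  ratio_set F (f.[x]%:~R / (c ^+ d.+1 * f.[y])%:~R).
Proof.
move=> c_neq0 fy_neq0; exists (cons_point x a), (fun i => c * cons_point y a i).
rewrite (meval_dhomogZ _ _ F_homog) -!horner_specialize_first.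
by rewrite mulf_neq0 ?expf_neq0.
Qed.

Variables (p : nat) (r : int).
Hypotheses (p_prime : prime p) (p_dvd_fr : (p%:Z %| f.[r])%Z)
  (p_ndvd_f'r : ~~ (p%:Z %| f^`().[r])%Z).

Lemma padic_dense_ratio_set : padic_dense p (ratio_set F).
Proof.
move=> q k; set nu := numq q; set de := denq q.
have de_gt0 : (0 < `|de|)%N by rewrite absz_gt0 denq_neq0.
have [be p_coprime_be de_eq] := pfactor_coprime p_prime de_gt0.
set al := logn p _ in de_eq; set c := p%:Z ^+ al.
have {}de_eq : de = be%:Z * c.
  by rewrite -[de]gez0_abs ?denq_ge0 // de_eq PoszM -[Posz (p ^ al)]natz natrX natz.
(* [M] bounds the p-adic valuation of the denominator [c^(d+1) f(y) de]. *)
set M := (al * d.+1 + 1 + al)%N; set K := (M + `|k|)%N.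
have lift := hensel_lift p_prime p_dvd_fr p_ndvd_f'r.
have [y [_ y_approx]] := lift (p%:Z * be%:Z) (dvdz_mulr _ (dvdzz _)) K.
have [x [_ x_approx]] := lift (p%:Z * nu * c ^+ d) (dvdz_mulr _ (dvdz_mulr _ (dvdzz _))) K.
have p_neq0 : p%:Z != 0 by rewrite eqz_nat -lt0n prime_gt0.
have c_neq0 : c != 0 by rewrite expf_neq0.
(* As [K >= 1], [f(y) = p be] modulo [p^2], so [f(y)] has valuation one. *)
have fy_ndvd : ~~ (p%:Z ^+ 2 %| f.[y])%Z.
  apply/negP => p2_dvd_fy.
  have : (p%:Z ^+ 2 %| p%:Z * be%:Z)%Z.
    rewrite (_ : _ * _ = f.[y] - (f.[y] - p%:Z * be%:Z)); last by ring.
    by rewrite rpredB // (dvdz_trans _ y_approx) // dvdz_exp2l // ltnS /K /M !addn_gt0 /= ?orbT.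
  rewrite expr2 dvdz_mul2l // dvdzE /=.
  by apply/negP; rewrite -prime_coprime.
have fy_neq0 : f.[y] != 0 by apply: contraNneq fy_ndvd => ->; rewrite dvdz0.
exists (f.[x]%:~R / (c ^+ d.+1 * f.[y])%:~R); split; first exact: ratio_set_specialize.
apply: (@padic_close_frac p K.+1 M k _ _ (f.[x] * de - nu * (c ^+ d.+1 * f.[y]))
          (c ^+ d.+1 * f.[y] * de) p_prime).
- by rewrite !mulf_neq0 ?expf_neq0 ?denq_neq0.
- rewrite -[q in LHS]divq_num_den -/nu -/de rmorphB !rmorphM /=.
  by field; rewrite !intr_eq0 ?expf_neq0 ?fy_neq0 ?denq_neq0.
- (* the approximations were chosen so that the main terms cancel *)
  rewrite (_ : _ - _ = (f.[x] - p%:Z * nu * c ^+ d) * de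
                     - nu * c ^+ d.+1 * (f.[y] - p%:Z * be%:Z)); last first.
    by rewrite de_eq exprS; ring.
  by rewrite rpredB ?(dvdz_mulr _ x_approx) ?(dvdz_mull _ y_approx).
- have log_fy : (logn p `|f.[y]| <= 1)%N.
    by move: fy_ndvd; rewrite dvdzE abszX /= pfactor_dvdn ?absz_gt0 // -ltnNge ltnS.
  rewrite !abszM !lognM ?muln_gt0 ?absz_gt0 ?mulf_neq0 ?expf_neq0 ?fy_neq0 ?denq_neq0 //.
  by rewrite !abszX /= -expnM pfactorK // -/al leq_add2r leq_add2l.
- exact/leqW.
Qed.

End RatioSet.

Theorem theorem1p1 (n d : nat) (F : {mpoly int[n.+1]}) :
  F != 0 -> F \is d.-homog -> (1 < d)%N ->
  (exists a : 'I_n -> int, disc (specialize_first F a) != 0) ->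
  forall N : nat, exists p : nat,
    (N < p)%N /\ prime p /\ padic_dense p (ratio_set F).
Proof.
(* [F != 0] already follows from the discriminant hypothesis. *)
move=> _ F_homog d_gt1 [a disc_neq0] N.
have [p [r [N_lt_p p_prime p_dvd_fr p_ndvd_f'r]]] := disc_neq0_hensel_prime disc_neq0 N.
exists p; do 2!split=> //.
case: d F_homog d_gt1 => [//|d] F_homog _.
exact: (padic_dense_ratio_set F_homog p_prime p_dvd_fr p_ndvd_f'r).
Qed.
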